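(* Let $(V_1, V_2)$ be an isometric pair such that $\dim E_1 < \infty$ and $[V_2^*, V_1]$ has finite rank. Then $C(V_1, V_2)$ has finite rank.
   Context: All Hilbert spaces are complex and separable. An isometric pair is a pair $(V_1,V_2)$ of commuting isometries. $[V_2^*,V_1] := V_2^*V_1 - V_1V_2^*$. $C(V_1,V_2) := I - V_1V_1^* - V_2V_2^* + V_1V_2V_1^*V_2^*$ and $E_1 := \ker(C(V_1,V_2)-I)$. *)

From HB Require Import structures.
From mathcomp Require Import all_boot all_order all_algebra.
From mathcomp Require Import reals.
From mathcomp.real_closed Require Import complex.
Set Implicit Arguments. Unset Strict Implicit. Unset Printing Implicit Defensive.
Import Order.TTheory GRing.Theory Num.Theory.
Local Open Scope ring_scope.

Section Hilbert.
Variable R : realType.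
Local Notation C := (R[i]).
Variable H : lmodType C.
Variable inner : H -> H -> C.

Definition hnorm (x : H) : R := Num.sqrt (complex.Re (inner x x)).

Definition is_hilbert : Prop :=
  (forall (a : C) (x y z : H), inner (a *: x + y) z = a * inner x z + inner y z) /\
      (forall x y : H, inner y x = (inner x y)^*) /\
      (forall x : H, 0 <= inner x x) /\
      (forall x : H, inner x x = 0 -> x = 0) /\
      (forall u : nat -> H,
         (forall e : R, 0 < e -> exists N, forall m n, (N <= m)%N -> (N <= n)%N ->
            hnorm (u m - u n) < e) ->
         exists l : H, forall e : R, 0 < e -> exists N, forall n, (N <= n)%N ->
            hnorm (u n - l) < e) /\
      (exists d : nat -> H, forall (x : H) (e : R), 0 < e -> exists n, hnorm (x - d n) < e).

Definition bounded_op (T : H -> H) : Prop :=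
  (forall (a : C) (x y : H), T (a *: x + y) = a *: T x + T y) /\
  exists M : R, forall x, hnorm (T x) <= M * hnorm x.

Definition is_adjoint (T Ts : H -> H) : Prop :=
  forall x y : H, inner (T x) y = inner x (Ts y).

Definition finite_dim (S : H -> Prop) : Prop :=
  exists s : seq H, forall x, S x ->
    exists c : 'I_(size s) -> C, x = \sum_(i < size s) c i *: s`_i.

Definition finite_rank (T : H -> H) : Prop := finite_dim (fun y => exists x, y = T x).

Definition isometric_pair (V1 V1s V2 V2s : H -> H) : Prop :=
  bounded_op V1 /\ bounded_op V2 /\ is_adjoint V1 V1s /\ is_adjoint V2 V2s /\
  (forall x, V1s (V1 x) = x) /\ (forall x, V2s (V2 x) = x) /\
  (forall x, V1 (V2 x) = V2 (V1 x)).

(* [V2^*, V1] = V2^* V1 - V1 V2^* *)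
Definition commutator (V1 V2s : H -> H) (x : H) : H := V2s (V1 x) - V1 (V2s x).

Definition defect (V1 V1s V2 V2s : H -> H) (x : H) : H :=
  x - V1 (V1s x) - V2 (V2s x) + V1 (V2 (V1s (V2s x))).

Definition E1 (V1 V1s V2 V2s : H -> H) (x : H) : Prop :=
  defect V1 V1s V2 V2s x - x = 0.

End Hilbert.

From HB Require Import structures.
From mathcomp Require Import all_boot all_order all_algebra.
From mathcomp Require Import reals.
From mathcomp.real_closed Require Import complex.
From Stdlib Require Import Classical.
Set Implicit Arguments.
Unset Strict Implicit.
Unset Printing Implicit Defensive.
Import GRing.Theory.
Local Open Scope ring_scope.

(* Write D = C(V1,V2) and K = [V2^*, V1].  Because V1 and V2 are commuting
   isometries, V1^* D = -K^* V2^* and V2^* D = -K V1^*, whence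
     (D - I) D = V1 K^* V2^* + Z K V1^*,   where Z = V2 - V1 V2 V1^*.
   K has finite rank, hence so has K^*: it vanishes on the common kernel of the
   finitely many functionals <., s_i> where the s_i span the range of K.  So
   (D - I) D has finite rank, and as ker (D - I) = E_1 is finite dimensional,
   the range of D lies in the finite-dimensional preimage of the range of
   (D - I) D. *)

Section LinearFunctions.
Variables (K : pzRingType) (U V : lmodType K).

Section LinearFor.
Variables (W : zmodType) (s : GRing.Scale.law K W) (f : V -> W).
Hypothesis lin_f : linear_for s f.

Lemma linear_forB x y : f (x - y) = f x - f y.
Proof. exact: zmod_morphism_linear. Qed.

Lemma linear_for0 : f 0 = 0.
Proof. by rewrite -(subrr (0 : V)) linear_forB subrr. Qed.

Lemma linear_forN x : f (- x) = - f x.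
Proof. by rewrite -(sub0r x) linear_forB linear_for0 sub0r. Qed.

Lemma linear_forD x y : f (x + y) = f x + f y.
Proof. exact: (GRing.semilinear_linear lin_f).2. Qed.

Lemma linear_forZ a x : f (a *: x) = s a (f x).
Proof. exact: GRing.scalable_linear. Qed.

End LinearFor.

Lemma linear_for_comp (W : zmodType) (s : K -> W -> W) (f : V -> W) (g : U -> V) :
  linear_for s f -> linear g -> linear_for s (f \o g).
Proof. by move=> lin_f lin_g a x y /=; rewrite lin_g lin_f. Qed.

Lemma linear_idfun : linear (@idfun V).
Proof. by []. Qed.

Lemma linear_add (f g : U -> V) : linear f -> linear g -> linear (f \+ g).
Proof. by move=> lin_f lin_g a x y /=; rewrite lin_f lin_g scalerDr addrACA. Qed.

Lemma linear_sub (f g : U -> V) : linear f -> linear g -> linear (f \- g).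
Proof.
by move=> lin_f lin_g a x y /=; rewrite lin_f lin_g scalerBr opprD addrACA.
Qed.

End LinearFunctions.

Definition in_span (K : pzRingType) (V : lmodType K) (s : seq V) (x : V) : Prop :=
  exists c : 'I_(size s) -> K, x = \sum_(i < size s) c i *: s`_i.

Definition finite_range (K : pzRingType) (V : lmodType K) (T : Type) (A : T -> V) :=
  exists s : seq V, forall x, in_span s (A x).

Section Span.
Variables (K : pzRingType) (V : lmodType K).

Lemma in_span_nil (x : V) : in_span [::] x <-> x = 0.
Proof.
split=> [[c ->]|->]; first by rewrite big_ord0.
by exists (fun=> 0); rewrite big_ord0.
Qed.

Lemma in_span_cons (a : V) s x :
  in_span (a :: s) x <-> exists k w, in_span s w /\ x = k *: a + w.
Proof.
split=> [[c ->]|[k [w [[c ->] ->]]]].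
  rewrite big_ord_recl; exists (c ord0), (\sum_(i < size s) c (lift ord0 i) *: s`_i).
  by split=> //; exists (fun i => c (lift ord0 i)).
exists (fun i : 'I_(size s).+1 => if unlift ord0 i is Some j then c j else k).
rewrite big_ord_recl unlift_none; congr (_ + _).
by apply: eq_bigr => i _; rewrite liftK.
Qed.

Lemma in_span0 (s : seq V) : in_span s 0.
Proof. by exists (fun=> 0); rewrite big1 // => i _; rewrite scale0r. Qed.

Lemma in_spanZD (s : seq V) k u v :
  in_span s u -> in_span s v -> in_span s (k *: u + v).
Proof.
elim: s u v => [|a s IHs] u v.
  by move=> /in_span_nil -> /in_span_nil ->; rewrite scaler0 addr0 in_span_nil.
move=> /in_span_cons[k1 [w1 [w1s ->]]] /in_span_cons[k2 [w2 [w2s ->]]].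
apply/in_span_cons; exists (k * k1 + k2), (k *: w1 + w2); split; first exact: IHs.
by rewrite scalerDr scalerA scalerDl addrACA.
Qed.

Lemma in_span_cat (s1 s2 : seq V) u v :
  in_span s1 u -> in_span s2 v -> in_span (s1 ++ s2) (u + v).
Proof.
elim: s1 u => [|a s1 IHs] u /=; first by move=> /in_span_nil ->; rewrite add0r.
move=> /in_span_cons[k [w [ws ->]]] vs; apply/in_span_cons.
by exists k, (w + v); split; [apply: IHs | rewrite addrA].
Qed.

Lemma eq_finite_range (T : Type) (A B : T -> V) :
  A =1 B -> finite_range B -> finite_range A.
Proof. by move=> eqAB [s sB]; exists s => x; rewrite eqAB. Qed.

Lemma finite_rangeD (T : Type) (A B : T -> V) :
  finite_range A -> finite_range B -> finite_range (A \+ B).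
Proof. by move=> [s sA] [t tB]; exists (s ++ t) => x; apply: in_span_cat. Qed.

End Span.

Section SpanMap.
Variables (K : pzRingType) (U V : lmodType K).

Lemma in_span_map (f : V -> U) s u :
  linear f -> in_span s u -> in_span (map f s) (f u).
Proof.
move=> lin_f; elim: s u => [|a s IHs] u /=.
  by move=> /in_span_nil ->; rewrite (linear_for0 lin_f) in_span_nil.
move=> /in_span_cons[k [w [ws ->]]]; apply/in_span_cons.
by exists k, (f w); split; [apply: IHs | rewrite lin_f].
Qed.

Lemma finite_range_comp (S T : Type) (f : V -> U) (A : S -> V) (g : T -> S) :
  linear f -> finite_range A -> finite_range (f \o A \o g).
Proof. by move=> lin_f [s sA]; exists (map f s) => x; apply: in_span_map. Qed.

End SpanMap.

Section FiniteRange.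
Variables (K : fieldType) (U V : lmodType K).

Lemma in_span_preimage (f : U -> V) (e : seq U) :
  linear f -> (forall y, f y = 0 -> in_span e y) ->
  forall g, exists t, forall y, in_span g (f y) -> in_span (t ++ e) y.
Proof.
move=> lin_f ker_f; elim=> [|a g [t IHg]].
  by exists [::] => y /in_span_nil /ker_f.
(* [y0] is a preimage of the new generator [a] modulo the span of [g]. *)
have [[y0 y0a]|no_y0] := classic (exists y0, in_span g (f y0 - a)).
  exists (y0 :: t) => y /in_span_cons[k [w [wg fy]]]; apply/in_span_cons.
  exists k, (y - k *: y0); split; last by rewrite addrC subrK.
  apply: IHg; have -> : f (y - k *: y0) = (- k) *: (f y0 - a) + w.
    rewrite (linear_forB lin_f) (linear_forZ lin_f) fy.
    by rewrite scaleNr scalerBr opprB addrAC.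
  exact: in_spanZD.
exists t => y /in_span_cons[k [w [wg fy]]].
have [k0|k_neq0] := eqVneq k 0; first by apply: IHg; rewrite fy k0 scale0r add0r.
exfalso; apply: no_y0; exists (k^-1 *: y).
rewrite (linear_forZ lin_f) /= fy scalerDr scalerA mulVf // scale1r addrAC subrr add0r.
by rewrite -[_ *: w]addr0; apply: in_spanZD => //; apply: in_span0.
Qed.

Lemma finite_range_of_comp (T : Type) (f : U -> V) (e : seq U) (A : T -> U) :
  linear f -> (forall y, f y = 0 -> in_span e y) ->
  finite_range (f \o A) -> finite_range A.
Proof.
move=> lin_f ker_f [g gfA]; have [t tg] := in_span_preimage lin_f ker_f g.
by exists (t ++ e) => x; apply: tg; apply: gfA.
Qed.

Lemma finite_range_common_kernel n (phi : 'I_n -> U -> K) (A : U -> V) :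
  (forall i, scalar (phi i)) -> linear A ->
  (forall y, (forall i, phi i y = 0) -> A y = 0) -> finite_range A.
Proof.
elim: n phi A => [|n IHn] phi A lin_phi lin_A kerA.
  by exists [::] => y; rewrite kerA ?in_span_nil // => -[].
have [[y0 phi_y0]|phi0_eq0] := classic (exists y0, phi ord0 y0 != 0); last first.
  apply: (IHn (fun i => phi (lift ord0 i))) => // y phi_y; apply: kerA => j.
  case: (unliftP ord0 j) => [i ->|->] //.
  by apply: NNPP => /eqP phi_y_neq0; apply: phi0_eq0; exists y.
pose c y := phi ord0 y / phi ord0 y0.
(* [pr] projects onto the kernel of [phi ord0] along [y0]. *)
pose pr y := y - c y *: y0.
have lin_pr : linear pr.
  move=> a x y; rewrite /pr /c (lin_phi ord0) mulrDl -mulrA scalerDl -scalerA.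
  by rewrite scalerBr opprD addrACA.
have phi0_pr y : phi ord0 (pr y) = 0.
  rewrite (linear_forB (lin_phi ord0)) (linear_forZ (lin_phi ord0)) /=.
  by rewrite /c divfK ?subrr.
have [t tA] : finite_range (A \o pr).
  apply: (IHn (fun i => phi (lift ord0 i) \o pr) (A \o pr)) => [i||y phi_pr /=].
  - exact: linear_for_comp (lin_phi _) lin_pr.
  - exact: linear_for_comp lin_A lin_pr.
  by apply: kerA => j; case: (unliftP ord0 j) => [i ->|->]; [apply: phi_pr|].
exists (A y0 :: t) => y; apply/in_span_cons; exists (c y), (A (pr y)).
split; first exact: tA.
by rewrite (linear_forB lin_A) (linear_forZ lin_A) /= addrC subrK.
Qed.

End FiniteRange.

Section InnerProduct.
Variables (R : realType) (H : lmodType R[i]) (inner : H -> H -> R[i]).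
Hypothesis inner_linear :
  forall a x y z, inner (a *: x + y) z = a * inner x z + inner y z.
Hypothesis inner_conj : forall x y, inner y x = (inner x y)^*.
Hypothesis inner_definite : forall x, inner x x = 0 -> x = 0.

Lemma scalar_inner z : scalar (inner^~ z).
Proof. by move=> a x y; apply: inner_linear. Qed.

Lemma innerBr z x y : inner z (x - y) = inner z x - inner z y.
Proof. by rewrite !(inner_conj _ z) (linear_forB (scalar_inner z)) rmorphB. Qed.

Lemma inner_extl u v : (forall z, inner u z = inner v z) -> u = v.
Proof.
move=> uv; apply/eqP; rewrite -subr_eq0; apply/eqP/inner_definite.
by rewrite (linear_forB (scalar_inner _)) uv subrr.
Qed.

Lemma inner_extr u v : (forall z, inner z u = inner z v) -> u = v.
Proof. by move=> uv; apply: inner_extl => z; rewrite inner_conj uv -inner_conj. Qed.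

Lemma inner_span_eq0 (s : seq H) u y :
  in_span s u -> (forall i : 'I_(size s), inner y s`_i = 0) -> inner y u = 0.
Proof.
move=> [c ->] ys; rewrite inner_conj.
rewrite (big_morph _ (linear_forD (scalar_inner y)) (linear_for0 (scalar_inner y))).
rewrite big1 ?rmorph0 // => i _.
by rewrite (linear_forZ (scalar_inner y)) /= inner_conj ys rmorph0 mulr0.
Qed.

Section Adjoint.
Variables (T Ts : H -> H).
Hypothesis adjT : is_adjoint inner T Ts.

Lemma adjoint_swap x y : inner (Ts x) y = inner x (T y).
Proof. by rewrite inner_conj -adjT -inner_conj. Qed.

Lemma adjoint_linear : linear Ts.
Proof.
move=> a x y; apply: inner_extl => z.
by rewrite !adjoint_swap inner_linear inner_linear !adjoint_swap.
Qed.

Lemma finite_range_adjoint : finite_range T -> finite_range Ts.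
Proof.
move=> [s sT].
apply: (finite_range_common_kernel (phi := fun (i : 'I_(size s)) y => inner y s`_i)).
- by move=> i; apply: scalar_inner.
- exact: adjoint_linear.
move=> y ys; apply: inner_definite; rewrite adjoint_swap.
exact: inner_span_eq0 (sT _) ys.
Qed.

End Adjoint.

Lemma adjoint_commute (A As B Bs : H -> H) :
  is_adjoint inner A As -> is_adjoint inner B Bs ->
  (forall x, A (B x) = B (A x)) -> forall x, As (Bs x) = Bs (As x).
Proof.
move=> adjA adjB AB x; apply: inner_extr => z.
by rewrite -adjA -adjB -adjB -adjA AB.
Qed.

Lemma adjoint_commutator (A As B Bs : H -> H) :
  is_adjoint inner A As -> is_adjoint inner B Bs ->
  is_adjoint inner (commutator A Bs) (commutator B As).
Proof.
move=> adjA adjB x y; rewrite /commutator innerBr (linear_forB (scalar_inner y)).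
by rewrite (adjoint_swap adjB) adjA -(adjoint_swap adjB) adjA.
Qed.

End InnerProduct.

Section Defect.
Variables (R : realType) (H : lmodType R[i]) (V1 V1s V2 V2s : H -> H).
Hypotheses (lin_V1 : linear V1) (lin_V2 : linear V2).
Hypotheses (lin_V1s : linear V1s) (lin_V2s : linear V2s).
Hypotheses (V1s_V1 : forall x, V1s (V1 x) = x) (V2s_V2 : forall x, V2s (V2 x) = x).
Hypothesis V1_V2 : forall x, V1 (V2 x) = V2 (V1 x).
Hypothesis V1s_V2s : forall x, V1s (V2s x) = V2s (V1s x).

Local Notation D := (defect V1 V1s V2 V2s).

Lemma linear_defect : linear D.
Proof.
have lin_V11s := linear_for_comp lin_V1 lin_V1s.
have lin_V22s := linear_for_comp lin_V2 lin_V2s.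
have lin_V121s2s :=
  linear_for_comp (linear_for_comp (linear_for_comp lin_V1 lin_V2) lin_V1s) lin_V2s.
exact (linear_add (linear_sub (linear_sub (@linear_idfun _ H) lin_V11s) lin_V22s) lin_V121s2s).
Qed.

Lemma V1s_defect x : V1s (D x) = - commutator V2 V1s (V2s x).
Proof.
rewrite /defect !(linear_forD lin_V1s) !(linear_forN lin_V1s) !V1s_V1.
by rewrite subrr sub0r opprB addrC.
Qed.

Lemma V2s_defect x : V2s (D x) = - commutator V1 V2s (V1s x).
Proof.
rewrite /defect !(linear_forD lin_V2s) !(linear_forN lin_V2s) V1_V2 !V2s_V2 V1s_V2s.
by rewrite (addrAC (V2s x)) subrr add0r opprB addrC.
Qed.

Lemma defect_defect x :
  D (D x) - D x =
    V1 (commutator V2 V1s (V2s x)) +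
    (V2 \- (V1 \o V2 \o V1s)) (commutator V1 V2s (V1s x)).
Proof.
move: (V1s_defect x) (V2s_defect x); move: (D x) => y V1s_y V2s_y.
rewrite /defect V1s_y V2s_y (linear_forN lin_V1s).
rewrite !(linear_forN lin_V2) !(linear_forN lin_V1) /=.
by rewrite !opprK addrC !addrA addNr add0r.
Qed.

End Defect.

Lemma finite_rankP (R : realType) (H : lmodType R[i]) (T : H -> H) :
  finite_rank T <-> finite_range T.
Proof.
split=> -[s sT]; exists s; first by move=> x; apply: sT; exists x.
by move=> _ [x ->]; apply: sT.
Qed.

Theorem corollary3p7 (R : realType) (H : lmodType R[i]) (inner : H -> H -> R[i])
  (hH : is_hilbert inner) (V1 V1s V2 V2s : H -> H) :
  isometric_pair inner V1 V1s V2 V2s ->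
  finite_dim (E1 V1 V1s V2 V2s) ->
  finite_rank (commutator V1 V2s) ->
  finite_rank (defect V1 V1s V2 V2s).
Proof.
case: hH => inner_linear [inner_conj [_ [inner_definite _]]].
case=> [[lin_V1 _] [[lin_V2 _] [adj1 [adj2 [V1s_V1 [V2s_V2 V1_V2]]]]]].
move=> [e E1_e] /finite_rankP rangeK; apply/finite_rankP.
have lin_V1s := adjoint_linear inner_linear inner_conj inner_definite adj1.
have lin_V2s := adjoint_linear inner_linear inner_conj inner_definite adj2.
have V1s_V2s := adjoint_commute inner_linear inner_conj inner_definite adj1 adj2 V1_V2.
have rangeKs := finite_range_adjoint inner_linear inner_conj inner_definite
  (adjoint_commutator inner_linear inner_conj adj1 adj2) rangeK.
have lin_D := linear_defect lin_V1 lin_V2 lin_V1s lin_V2s.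
apply: (finite_range_of_comp (linear_sub lin_D (@linear_idfun _ H)) E1_e).
apply: eq_finite_range
  (defect_defect lin_V1 lin_V2 lin_V1s lin_V2s V1s_V1 V2s_V2 V1_V2 V1s_V2s) _.
apply: finite_rangeD.
  exact: finite_range_comp lin_V1 rangeKs.
have lin_V121s := linear_for_comp (linear_for_comp lin_V1 lin_V2) lin_V1s.
exact: finite_range_comp (linear_sub lin_V2 lin_V121s) rangeK.
Qed.
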